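(* For every integer $n\ge 2$, the subdivision scheme $S_n$ generates $C^1$ limit functions, i.e. for every bounded initial sequence $\mathbf f^0$ the limit function generated by $S_n$ from $\mathbf f^0$ is continuously differentiable.
   Context: For an integer $n\ge1$, the subdivision scheme $S_n$ acts on real sequences $\mathbf f^k=(f^k_i)_{i\in\mathbb Z}$ (the value $f^k_i$ being associated with the dyadic point $2^{-k}i$), starting from initial data $\mathbf f^0$, by the refinement rules $$f^{k+1}_{2i}=\frac1{2n-1}\sum_{j=-n+1}^{n-1}f^k_{i+j},\qquad f^{k+1}_{2i+1}=\frac1{2n}\sum_{j=-n+1}^{n}f^k_{i+j},\qquad i\in\mathbb Z,\ k\ge0.$$ The scheme is convergent: for every bounded $\mathbf f^0$ there is a continuous $F:\mathbb R\to\mathbb R$ (the limit function) with $\lim_{k\to\infty}\sup_{i}|f^k_i-F(2^{-k}i)|=0$. *)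

From Stdlib Require Import Reals ZArith.
From Coquelicot Require Import Coquelicot.
Open Scope R_scope.

(* For m = 2i or m = 2i+1 we have i = m / 2
   (floor division), and
     f^{k+1}_{2i}   = 1/(2n-1) * sum_{j=-n+1}^{n-1} f^k_{i+j}
     f^{k+1}_{2i+1} = 1/(2n)   * sum_{j=-n+1}^{n}   f^k_{i+j}.
   The sums are written with t = j + n - 1 ranging over 0..2n-2 (resp. 0..2n-1);
   note [sum_f_R0 g N] = g 0 + ... + g N. *)
Definition subdiv_step (n : nat) (f : Z -> R) (m : Z) : R :=
  let i := (m / 2)%Z in
  if Z.even m then
    sum_f_R0 (fun t => f (i - Z.of_nat n + 1 + Z.of_nat t)%Z) (2 * n - 2)
      / INR (2 * n - 1)
  else
    sum_f_R0 (fun t => f (i - Z.of_nat n + 1 + Z.of_nat t)%Z) (2 * n - 1)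
      / INR (2 * n).

Fixpoint subdiv (n : nat) (f0 : Z -> R) (k : nat) : Z -> R :=
  match k with
  | O => f0
  | S k' => subdiv_step n (subdiv n f0 k')
  end.

Definition bounded_seq (f : Z -> R) : Prop :=
  exists M : R, forall i : Z, Rabs (f i) <= M.

Definition is_limit_function (n : nat) (f0 : Z -> R) (F : R -> R) : Prop :=
  (forall x : R, continuous F x) /\
  (forall eps : R, 0 < eps -> exists K : nat, forall k : nat, (K <= k)%nat ->
     forall i : Z, Rabs (subdiv n f0 k i - F (IZR i / 2 ^ k)) <= eps).

Definition is_C1 (F : R -> R) : Prop :=
  (forall x : R, ex_derive F x) /\ (forall x : R, continuous (Derive F) x).

From Stdlib Require Import Reals ZArith Lra Lia.
From Coquelicot Require Import Coquelicot.
Open Scope R_scope.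

(* Let d^k_l = 2^k (f^k_{l+1} - f^k_l).  Summation by parts turns the two
   refinement rules into a derived scheme in which every d^{k+1}_m is a convex
   combination of the 2n - 1 values d^k_{m/2 - n + 1 + t}, each weight being at
   least theta = 1 / (n (2n - 1)).  Hence the oscillation of d^k over windows
   of length 4n - 4 shrinks by the factor 1 - theta at every level, so d^k
   converges geometrically, along any dyadic approximation of x, to a limit
   G(x) that is continuous in x.  Summing the differences d^k / 2^k between
   two grid points and letting k go to infinity shows that the difference
   quotients of F are uniformly close to G, i.e. F' = G. *)

Lemma sum_f_R0_telescope (h : nat -> R) (N : nat) :
  sum_f_R0 (fun t => h (S t) - h t) N = h (S N) - h O.
Proof. induction N as [|N IH]; simpl; [ring | rewrite IH; ring]. Qed.

Lemma sum_succ_INR (N : nat) :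
  sum_f_R0 (fun t => INR t + 1) N = (INR N + 1) * (INR N + 2) / 2.
Proof. rewrite plus_sum, sum_INR, sum_cte, S_INR. field. Qed.

Lemma sum_rev_succ_INR (N : nat) :
  sum_f_R0 (fun t => INR N + 1 - INR t) N = (INR N + 1) * (INR N + 2) / 2.
Proof.
  rewrite (sum_eq _ (fun t => (INR N + 2) - (INR t + 1))) by (intros; ring).
  rewrite minus_sum, sum_cte, sum_succ_INR, S_INR. field.
Qed.

Lemma sum_by_parts_ramp_up (h : nat -> R) (N : nat) :
  sum_f_R0 (fun t => (INR t + 1) * (h (S t) - h t)) N
  = (INR N + 1) * h (S N) - sum_f_R0 h N.
Proof.
  induction N as [|N IH]; [simpl; ring|].
  rewrite !tech5, IH, S_INR. ring.
Qed.

Lemma sum_by_parts_ramp_down (h : nat -> R) (N : nat) :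
  sum_f_R0 (fun t => (INR N + 1 - INR t) * (h (S t) - h t)) N
  = sum_f_R0 (fun t => h (S t)) N - (INR N + 1) * h O.
Proof.
  induction N as [|N IH]; [simpl; ring|].
  rewrite tech5.
  rewrite (sum_eq _ (fun t => (INR N + 1 - INR t) * (h (S t) - h t) + (h (S t) - h t)))
    by (intros t _; rewrite S_INR; ring).
  rewrite plus_sum, IH, sum_f_R0_telescope, tech5, !S_INR. ring.
Qed.

Lemma sum_f_R0_ge_term (y : nat -> R) (N t0 : nat) :
  (forall t, (t <= N)%nat -> 0 <= y t) -> (t0 <= N)%nat -> y t0 <= sum_f_R0 y N.
Proof.
  intros Hy Ht0. induction N as [|N IH]; simpl.
  - replace t0 with O by lia. lra.
  - assert (Hpos : 0 <= sum_f_R0 y N).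
    { rewrite <- (Rmult_0_l (INR (S N))), <- sum_cte.
      apply sum_Rle. intros t Ht. apply Hy. lia. }
    assert (HSN : 0 <= y (S N)) by (apply Hy; lia).
    destruct (Nat.eq_dec t0 (S N)) as [->|Hne]; [lra|].
    assert (y t0 <= sum_f_R0 y N) by (apply IH; [intros t Ht; apply Hy | ]; lia).
    lra.
Qed.

Lemma convex_comb_le (w x : nat -> R) (N t0 : nat) (th M : R) :
  0 <= th -> (forall t, (t <= N)%nat -> th <= w t) -> sum_f_R0 w N = 1 ->
  (forall t, (t <= N)%nat -> x t <= M) -> (t0 <= N)%nat ->
  sum_f_R0 (fun t => w t * x t) N <= M - th * (M - x t0).
Proof.
  intros Hth Hw Hsum Hx Ht0.
  assert (Hgap : w t0 * (M - x t0) <= sum_f_R0 (fun t => w t * (M - x t)) N).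
  { apply (sum_f_R0_ge_term (fun t => w t * (M - x t))); [|exact Ht0].
    intros t Ht. specialize (Hw t Ht). specialize (Hx t Ht). nra. }
  rewrite (sum_eq _ (fun t => w t * M - w t * (M - x t))) by (intros; ring).
  rewrite minus_sum, <- scal_sum, Hsum.
  specialize (Hw t0 Ht0). specialize (Hx t0 Ht0). nra.
Qed.

Lemma convex_comb_ge (w x : nat -> R) (N t0 : nat) (th L : R) :
  0 <= th -> (forall t, (t <= N)%nat -> th <= w t) -> sum_f_R0 w N = 1 ->
  (forall t, (t <= N)%nat -> L <= x t) -> (t0 <= N)%nat ->
  L + th * (x t0 - L) <= sum_f_R0 (fun t => w t * x t) N.
Proof.
  intros Hth Hw Hsum Hx Ht0.
  assert (H := convex_comb_le w (fun t => - x t) N t0 th (- L) Hth Hw Hsum).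
  rewrite (sum_eq _ (fun t => (w t * x t) * -1)) in H by (intros; ring).
  rewrite <- scal_sum in H.
  enough (-1 * sum_f_R0 (fun t => w t * x t) N <= - L - th * (- L - - x t0)) by lra.
  apply H; [intros t Ht; specialize (Hx t Ht); lra | exact Ht0].
Qed.

Lemma convex_comb_dist (w x : nat -> R) (N : nat) (c r : R) :
  (forall t, (t <= N)%nat -> 0 <= w t) -> sum_f_R0 w N = 1 ->
  (forall t, (t <= N)%nat -> Rabs (x t - c) <= r) ->
  Rabs (sum_f_R0 (fun t => w t * x t) N - c) <= r.
Proof.
  intros Hw Hsum Hx.
  replace (sum_f_R0 (fun t => w t * x t) N - c)
    with (sum_f_R0 (fun t => w t * (x t - c)) N).
  2:{ rewrite (sum_eq _ (fun t => w t * x t - w t * c)) by (intros; ring).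
      rewrite minus_sum, <- scal_sum, Hsum. ring. }
  eapply Rle_trans; [apply Rsum_abs|].
  replace r with (sum_f_R0 (fun t => w t * r) N) by (rewrite <- scal_sum, Hsum; ring).
  apply sum_Rle. intros t Ht.
  rewrite Rabs_mult, (Rabs_pos_eq (w t)) by auto.
  apply Rmult_le_compat_l; auto.
Qed.

Lemma Z_window_argmax (g : Z -> R) (a : Z) (K : nat) :
  exists j, (a <= j <= a + Z.of_nat K)%Z /\
    forall j', (a <= j' <= a + Z.of_nat K)%Z -> g j' <= g j.
Proof.
  induction K as [|K [j [Hj Hmax]]].
  - exists a. split; [lia|]. intros j' Hj'. replace j' with a by lia. lra.
  - set (z := (a + Z.of_nat (S K))%Z).
    destruct (Rle_dec (g z) (g j)) as [Hle|Hlt].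
    + exists j. split; [lia|]. intros j' Hj'.
      destruct (Z.eq_dec j' z) as [->|Hne]; [exact Hle | apply Hmax; lia].
    + exists z. split; [unfold z; lia|]. intros j' Hj'.
      destruct (Z.eq_dec j' z) as [->|Hne]; [lra|].
      assert (g j' <= g j) by (apply Hmax; lia). lra.
Qed.

Lemma sum_of_increments_dist (u : Z -> R) (P : Z) (L : nat) (c e : R) :
  (forall t, (t < L)%nat ->
     Rabs (u (P + Z.of_nat t + 1)%Z - u (P + Z.of_nat t)%Z - c) <= e) ->
  Rabs (u (P + Z.of_nat L)%Z - u P - INR L * c) <= INR L * e.
Proof.
  induction L as [|L IH]; intros H.
  - rewrite Z.add_0_r. simpl. replace (u P - u P - 0 * c) with 0 by ring.
    rewrite Rabs_R0. lra.
  - assert (H1 := IH (fun t Ht => H t ltac:(lia))).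
    assert (H2 := H L ltac:(lia)).
    replace (P + Z.of_nat (S L))%Z with (P + Z.of_nat L + 1)%Z by lia.
    rewrite S_INR. apply Rabs_le_between in H1, H2. apply Rabs_le_between. lra.
Qed.

Lemma inv_pow2_pos (k : nat) : 0 < / 2 ^ k.
Proof. apply Rinv_0_lt_compat, pow_lt; lra. Qed.

Lemma inv_pow2_le (K k : nat) : (K <= k)%nat -> / 2 ^ k <= / 2 ^ K.
Proof. intros H. apply Rinv_le_contravar; [apply pow_lt; lra | apply Rle_pow; lra || lia]. Qed.

Lemma inv_pow2_S (k : nat) : / 2 ^ S k = / 2 ^ k / 2.
Proof. simpl. field. apply pow_nonzero. lra. Qed.

Lemma is_lim_seq_inv_pow2 : is_lim_seq (fun k => / 2 ^ k) 0.
Proof.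
  apply (is_lim_seq_ext (fun k => (/ 2) ^ k)); [intros k; apply pow_inv|].
  apply is_lim_seq_geom. rewrite Rabs_pos_eq; lra.
Qed.

Lemma Z_div_pow2_bounds (l : Z) (p : nat) :
  IZR (l / 2 ^ Z.of_nat p) <= IZR l / 2 ^ p < IZR (l / 2 ^ Z.of_nat p) + 1.
Proof.
  assert (Hq : (0 < 2 ^ Z.of_nat p)%Z) by (apply Z.pow_pos_nonneg; lia).
  pose proof (Z.div_mod l (2 ^ Z.of_nat p) ltac:(lia)) as Hdm.
  pose proof (Z.mod_pos_bound l _ Hq) as Hmod.
  set (a := (l / 2 ^ Z.of_nat p)%Z) in *. set (q := (2 ^ Z.of_nat p)%Z) in *.
  assert (H1 : IZR (q * a) <= IZR l) by (apply IZR_le; lia).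
  assert (H2 : IZR l < IZR (q * (a + 1))) by (apply IZR_lt; lia).
  rewrite mult_IZR in H1, H2. rewrite plus_IZR in H2.
  unfold q in H1, H2. rewrite <- pow_IZR in H1, H2.
  assert (0 < 2 ^ p) by (apply pow_lt; lra).
  split; [apply Rle_div_r | apply Rlt_div_l]; auto; simpl in *; lra.
Qed.

Lemma Z_div_pow2_near (x : R) (K k : nat) (l : Z) : (K <= k)%nat ->
  Rabs (IZR l / 2 ^ k - x) <= / 2 ^ K ->
  2 ^ K * x - 2 < IZR (l / 2 ^ Z.of_nat (k - K)) <= 2 ^ K * x + 1.
Proof.
  intros Hk Hl.
  pose proof (Z_div_pow2_bounds l (k - K)) as Hb.
  assert (H2K : 0 < 2 ^ K) by (apply pow_lt; lra).
  assert (0 < 2 ^ (k - K)) by (apply pow_lt; lra).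
  replace (IZR l / 2 ^ (k - K)) with (2 ^ K * (IZR l / 2 ^ k)) in Hb.
  2:{ replace k with (K + (k - K))%nat at 1 by lia. rewrite pow_add. field. lra. }
  apply Rabs_le_between' in Hl.
  assert (2 ^ K * (IZR l / 2 ^ k) <= 2 ^ K * x + 1).
  { replace (2 ^ K * x + 1) with (2 ^ K * (x + / 2 ^ K)) by (field; lra).
    apply Rmult_le_compat_l; lra. }
  assert (2 ^ K * x - 1 <= 2 ^ K * (IZR l / 2 ^ k)).
  { replace (2 ^ K * x - 1) with (2 ^ K * (x - / 2 ^ K)) by (field; lra).
    apply Rmult_le_compat_l; lra. }
  lra.
Qed.

Definition dfloor (k : nat) (x : R) : Z := Int_part (2 ^ k * x).

Lemma dfloor_bounds (k : nat) (x : R) :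
  IZR (dfloor k x) / 2 ^ k <= x /\ x - / 2 ^ k < IZR (dfloor k x) / 2 ^ k.
Proof.
  destruct (base_Int_part (2 ^ k * x)) as [H1 H2].
  assert (0 < 2 ^ k) by (apply pow_lt; lra).
  split.
  - apply Rle_div_l; auto. unfold dfloor. lra.
  - replace (x - / 2 ^ k) with ((2 ^ k * x - 1) / 2 ^ k) by (field; lra).
    apply Rmult_lt_compat_r; [apply Rinv_0_lt_compat; auto | unfold dfloor; lra].
Qed.

Lemma dfloor_dist (k : nat) (x : R) : Rabs (IZR (dfloor k x) / 2 ^ k - x) <= / 2 ^ k.
Proof. destruct (dfloor_bounds k x). apply Rabs_le_between. lra. Qed.

Lemma is_lim_seq_dfloor (x : R) : is_lim_seq (fun k => IZR (dfloor k x) / 2 ^ k) x.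
Proof.
  apply (is_lim_seq_le_le (fun k => x - / 2 ^ k) _ (fun _ => x)).
  - intros k. destruct (dfloor_bounds k x). lra.
  - replace (Finite x) with (Finite (x - 0)) by (f_equal; ring).
    apply is_lim_seq_minus'; [apply is_lim_seq_const | apply is_lim_seq_inv_pow2].
  - apply is_lim_seq_const.
Qed.

Section DerivedScheme.

Variable n : nat.
Hypothesis n_ge2 : (2 <= n)%nat.
Variable f0 : Z -> R.

(* The rule at [2 i] averages [f^k] over [tap i 0 .. tap i last_tap], the rule
   at [2 i + 1] over one more tap. *)
Definition last_tap : nat := (2 * n - 2)%nat.
Definition tap (i : Z) (t : nat) : Z := (i - Z.of_nat n + 1 + Z.of_nat t)%Z.

Definition divdiff (k : nat) (l : Z) : R :=
  2 ^ k * (subdiv n f0 k (l + 1) - subdiv n f0 k l).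

(* [theta = 1 / (n (2n - 1))], the smallest weight of the derived scheme. *)
Definition theta : R := 2 / ((INR last_tap + 1) * (INR last_tap + 2)).
Definition mu : R := 1 - theta.

Lemma theta_pos : 0 < theta.
Proof. unfold theta. pose proof (pos_INR last_tap). apply Rdiv_lt_0_compat; nra. Qed.

Lemma mu_bounds : 0 < mu < 1.
Proof.
  pose proof theta_pos. unfold mu. enough (theta < 1) by lra.
  assert (1 <= INR last_tap) by (apply (le_INR 1); unfold last_tap; lia).
  unfold theta. apply Rlt_div_l; nra.
Qed.

Lemma subdiv_step_even (f : Z -> R) (i : Z) :
  subdiv_step n f (2 * i) = sum_f_R0 (fun t => f (tap i t)) last_tap / (INR last_tap + 1).
Proof.
  unfold subdiv_step.
  replace ((2 * i) / 2)%Z with i by (rewrite Z.mul_comm, Z.div_mul; lia).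
  rewrite Z.even_mul. change (Z.even 2 || Z.even i)%bool with true. cbv iota.
  unfold last_tap. replace (2 * n - 1)%nat with (S (2 * n - 2)) by lia.
  rewrite S_INR. reflexivity.
Qed.

Lemma subdiv_step_odd (f : Z -> R) (i : Z) :
  subdiv_step n f (2 * i + 1) = sum_f_R0 (fun t => f (tap i t)) (S last_tap) / (INR last_tap + 2).
Proof.
  unfold subdiv_step.
  replace ((2 * i + 1) / 2)%Z with i by (rewrite Z.add_comm, Z.mul_comm, Z.div_add; reflexivity || lia).
  rewrite Z.even_add, Z.even_mul.
  change (Bool.eqb (Z.even 2 || Z.even i) (Z.even 1)) with false. cbv iota.
  unfold last_tap. replace (2 * n - 1)%nat with (S (2 * n - 2)) by lia.
  replace (INR (2 * n)) with (INR (2 * n - 2) + 2); [reflexivity|].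
  replace (2 * n)%nat with (2 * n - 2 + 2)%nat at 2 by lia.
  rewrite plus_INR. simpl. ring.
Qed.

Lemma divdiff_tap (k : nat) (i : Z) (t : nat) :
  divdiff k (tap i t) = 2 ^ k * (subdiv n f0 k (tap i (S t)) - subdiv n f0 k (tap i t)).
Proof. unfold divdiff, tap. do 3 f_equal. lia. Qed.

Lemma divdiff_even (k : nat) (i : Z) :
  divdiff (S k) (2 * i) =
  sum_f_R0 (fun t => theta * (INR t + 1) * divdiff k (tap i t)) last_tap.
Proof.
  set (h t := subdiv n f0 k (tap i t)).
  rewrite (sum_eq _ (fun t => (INR t + 1) * (h (S t) - h t) * (theta * 2 ^ k)))
    by (intros t _; rewrite divdiff_tap; unfold h; ring).
  rewrite <- scal_sum, sum_by_parts_ramp_up.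
  unfold divdiff. change (subdiv n f0 (S k)) with (subdiv_step n (subdiv n f0 k)).
  rewrite subdiv_step_even, subdiv_step_odd, tech5. fold h.
  pose proof (pos_INR last_tap). unfold theta, h. rewrite <- tech_pow_Rmult. field. lra.
Qed.

Lemma divdiff_odd (k : nat) (i : Z) :
  divdiff (S k) (2 * i + 1) =
  sum_f_R0 (fun t => theta * (INR last_tap + 1 - INR t) * divdiff k (tap i t)) last_tap.
Proof.
  set (h t := subdiv n f0 k (tap i t)).
  rewrite (sum_eq _ (fun t => (INR last_tap + 1 - INR t) * (h (S t) - h t) * (theta * 2 ^ k)))
    by (intros t _; rewrite divdiff_tap; unfold h; ring).
  rewrite <- scal_sum, sum_by_parts_ramp_down.
  unfold divdiff. change (subdiv n f0 (S k)) with (subdiv_step n (subdiv n f0 k)).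
  replace (2 * i + 1 + 1)%Z with (2 * (i + 1))%Z by lia.
  rewrite subdiv_step_even, subdiv_step_odd.
  rewrite (sum_eq (fun t => subdiv n f0 k (tap (i + 1) t)) (fun t => h (S t)))
    by (intros t _; unfold h, tap; f_equal; lia).
  fold h. rewrite (decomp_sum h (S last_tap)) by lia. simpl pred.
  pose proof (pos_INR last_tap). unfold theta. rewrite <- tech_pow_Rmult. field. lra.
Qed.

Lemma divdiff_convex_comb (k : nat) (m : Z) :
  exists w : nat -> R,
    (forall t, (t <= last_tap)%nat -> theta <= w t) /\ sum_f_R0 w last_tap = 1 /\
    divdiff (S k) m = sum_f_R0 (fun t => w t * divdiff k (tap (m / 2) t)) last_tap.
Proof.
  pose proof theta_pos. pose proof (pos_INR last_tap).
  pose proof (Z.div_mod m 2 ltac:(lia)). pose proof (Z.mod_pos_bound m 2 ltac:(lia)).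
  destruct (Z.eq_dec (m mod 2) 0) as [Hev|Hodd].
  - exists (fun t => theta * (INR t + 1)). split; [|split].
    + intros t _. pose proof (pos_INR t). nra.
    + rewrite (sum_eq _ (fun t => (INR t + 1) * theta)) by (intros; ring).
      rewrite <- scal_sum, sum_succ_INR. unfold theta. field. lra.
    + replace m with (2 * (m / 2))%Z at 1 by lia. apply divdiff_even.
  - exists (fun t => theta * (INR last_tap + 1 - INR t)). split; [|split].
    + intros t Ht. apply le_INR in Ht. nra.
    + rewrite (sum_eq _ (fun t => (INR last_tap + 1 - INR t) * theta)) by (intros; ring).
      rewrite <- scal_sum, sum_rev_succ_INR. unfold theta. field. lra.
    + replace m with (2 * (m / 2) + 1)%Z at 1 by lia. apply divdiff_odd.
Qed.

Lemma tap_dist (i : Z) (t : nat) :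
  (t <= last_tap)%nat -> (Z.abs (tap i t - i) <= Z.of_nat n - 1)%Z.
Proof. unfold last_tap, tap. lia. Qed.

Definition osc_range : Z := (4 * Z.of_nat n - 4)%Z.

Definition osc_le (k : nat) (r : R) : Prop :=
  forall l l', (Z.abs (l - l') <= osc_range)%Z -> Rabs (divdiff k l - divdiff k l') <= r.

(* The windows of [m / 2] and [m' / 2] lie in one interval of length
   [osc_range] and share the tap [c]; as every weight is at least [theta],
   the two averages keep [theta] times their distance to [c] away from the
   maximum and from the minimum of that interval respectively. *)
Lemma divdiff_succ_sub_le (k : nat) (r : R) : osc_le k r ->
  forall m m', (Z.abs (m - m') <= osc_range)%Z ->
  divdiff (S k) m - divdiff (S k) m' <= mu * r.
Proof.
  intros Hosc m m' Hmm.
  pose proof (Z.div_mod m 2 ltac:(lia)) as Hm.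
  pose proof (Z.mod_pos_bound m 2 ltac:(lia)) as Hmr.
  pose proof (Z.div_mod m' 2 ltac:(lia)) as Hm'.
  pose proof (Z.mod_pos_bound m' 2 ltac:(lia)) as Hmr'.
  set (i := (m / 2)%Z) in *. set (i' := (m' / 2)%Z) in *.
  set (a := (Z.min i i' - Z.of_nat n + 1)%Z).
  set (c := (Z.max i i' - Z.of_nat n + 1)%Z).
  destruct (Z_window_argmax (divdiff k) a (4 * n - 4)) as [jmax [Hjmax Hmax]].
  replace (Z.of_nat (4 * n - 4)) with osc_range in Hjmax, Hmax by (unfold osc_range; lia).
  set (M := divdiff k jmax).
  assert (Hmin : forall j, (a <= j <= a + osc_range)%Z -> M - r <= divdiff k j).
  { intros j Hj. assert (Hj' := Hosc j jmax ltac:(lia)).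
    apply Rabs_le_between in Hj'. unfold M. lra. }
  pose proof theta_pos as Hth.
  destruct (divdiff_convex_comb k m) as [w [Hw [Hsw ->]]].
  destruct (divdiff_convex_comb k m') as [w' [Hw' [Hsw' ->]]].
  fold i i'.
  assert (Hup : sum_f_R0 (fun t => w t * divdiff k (tap i t)) last_tap
                <= M - theta * (M - divdiff k c)).
  { replace c with (tap i (Z.to_nat (Z.max i i' - i))) by (unfold c, tap; lia).
    apply (convex_comb_le w (fun t => divdiff k (tap i t))); auto; [lra| |].
    - intros t Ht. apply Hmax. unfold last_tap, a, tap, osc_range in *. lia.
    - unfold last_tap, osc_range in *. lia. }
  assert (Hlo : (M - r) + theta * (divdiff k c - (M - r))
                <= sum_f_R0 (fun t => w' t * divdiff k (tap i' t)) last_tap).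
  { replace c with (tap i' (Z.to_nat (Z.max i i' - i'))) by (unfold c, tap; lia).
    apply (convex_comb_ge w' (fun t => divdiff k (tap i' t))); auto; [lra| |].
    - intros t Ht. apply Hmin. unfold last_tap, a, tap, osc_range in *. lia.
    - unfold last_tap, osc_range in *. lia. }
  unfold mu. nra.
Qed.

Lemma osc_le_succ (k : nat) (r : R) : osc_le k r -> osc_le (S k) (mu * r).
Proof.
  intros Hosc m m' Hmm. apply Rabs_le_between. split.
  - enough (divdiff (S k) m' - divdiff (S k) m <= mu * r) by lra.
    apply divdiff_succ_sub_le; auto. lia.
  - apply divdiff_succ_sub_le; auto.
Qed.

Variable B : R.
Hypothesis f0_bounded : forall i, Rabs (f0 i) <= B.

Lemma bound_nonneg : 0 <= B.
Proof. pose proof (f0_bounded 0%Z). pose proof (Rabs_pos (f0 0%Z)). lra. Qed.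

Lemma osc_le_geometric (k : nat) : osc_le k (4 * B * mu ^ k).
Proof.
  induction k as [|k IH].
  - intros l l' _. unfold divdiff. simpl.
    pose proof (f0_bounded (l + 1)) as H1. pose proof (f0_bounded l) as H2.
    pose proof (f0_bounded (l' + 1)) as H3. pose proof (f0_bounded l') as H4.
    apply Rabs_le_between in H1, H2, H3, H4. apply Rabs_le_between. lra.
  - replace (4 * B * mu ^ S k) with (mu * (4 * B * mu ^ k)) by (simpl; ring).
    apply osc_le_succ, IH.
Qed.

Lemma divdiff_parent_dist (k : nat) (m : Z) :
  Rabs (divdiff (S k) m - divdiff k (m / 2)) <= 4 * B * mu ^ k.
Proof.
  pose proof theta_pos.
  destruct (divdiff_convex_comb k m) as [w [Hw [Hsw ->]]].
  apply convex_comb_dist; auto.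
  - intros t Ht. specialize (Hw t Ht). lra.
  - intros t Ht. apply osc_le_geometric.
    pose proof (tap_dist (m / 2) t Ht). unfold osc_range. lia.
Qed.

(* Geometric sum of the parent errors, using [1 - mu = theta]. *)
Lemma divdiff_ancestor_dist (K p : nat) (l : Z) :
  Rabs (divdiff (K + p) l - divdiff K (l / 2 ^ Z.of_nat p))
  <= 4 * B * mu ^ K * (1 - mu ^ p) / theta.
Proof.
  pose proof theta_pos. revert l.
  induction p as [|p IH]; intros l.
  - rewrite Nat.add_0_r, Z.pow_0_r, Z.div_1_r, Rminus_diag, Rabs_R0.
    simpl. unfold Rdiv. right; ring.
  - rewrite Nat.add_succ_r.
    replace (l / 2 ^ Z.of_nat (S p))%Z with ((l / 2) / 2 ^ Z.of_nat p)%Z.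
    2:{ rewrite Z.div_div, Nat2Z.inj_succ, Z.pow_succ_r; lia. }
    pose proof (divdiff_parent_dist (K + p) l) as H1.
    pose proof (IH (l / 2)%Z) as H2.
    apply Rabs_le_between in H1, H2. apply Rabs_le_between.
    replace (4 * B * mu ^ K * (1 - mu ^ S p) / theta)
      with (4 * B * mu ^ (K + p) + 4 * B * mu ^ K * (1 - mu ^ p) / theta)
      by (rewrite pow_add; simpl; unfold mu; field; lra).
    lra.
Qed.

Lemma divdiff_ancestor_dist_le (K p : nat) (l : Z) :
  Rabs (divdiff (K + p) l - divdiff K (l / 2 ^ Z.of_nat p)) <= 4 * B * mu ^ K / theta.
Proof.
  eapply Rle_trans; [apply divdiff_ancestor_dist|].
  pose proof theta_pos. pose proof mu_bounds. pose proof bound_nonneg.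
  assert (0 <= mu ^ p) by (apply pow_le; lra).
  assert (0 <= 4 * B * mu ^ K) by (pose proof (pow_le mu K); nra).
  apply Rmult_le_compat_r; [left; apply Rinv_0_lt_compat; lra | nra].
Qed.

(* Two ancestor errors plus the oscillation at level [K]. *)
Definition local_osc (K : nat) : R := 4 * B * mu ^ K * (2 / theta + 1).

Lemma local_osc_nonneg (K : nat) : 0 <= local_osc K.
Proof.
  pose proof theta_pos. pose proof mu_bounds. pose proof bound_nonneg.
  pose proof (pow_le mu K). assert (0 <= 2 / theta) by (apply Rle_mult_inv_pos; lra).
  unfold local_osc. apply Rmult_le_pos; [|lra]. nra.
Qed.

Lemma local_osc_small (eps : R) : 0 < eps -> exists K, local_osc K <= eps.
Proof.
  intros Heps.
  pose proof theta_pos. pose proof mu_bounds. pose proof bound_nonneg.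
  assert (0 <= 2 / theta) by (apply Rle_mult_inv_pos; lra).
  set (c := 4 * B * (2 / theta + 1) + 1).
  assert (Hc : 1 <= c) by (unfold c; nra).
  destruct (pow_lt_1_zero mu ltac:(rewrite Rabs_pos_eq; lra) (eps / c)) as [K HK].
  { apply Rdiv_lt_0_compat; lra. }
  exists K. specialize (HK K (le_n K)).
  rewrite Rabs_pos_eq in HK by (apply pow_le; lra).
  apply Rlt_div_r in HK; [|lra].
  pose proof (pow_le mu K). unfold local_osc, c in *. nra.
Qed.

Lemma divdiff_local_dist (x : R) (K k k' : nat) (l l' : Z) :
  (K <= k)%nat -> (K <= k')%nat ->
  Rabs (IZR l / 2 ^ k - x) <= / 2 ^ K -> Rabs (IZR l' / 2 ^ k' - x) <= / 2 ^ K ->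
  Rabs (divdiff k l - divdiff k' l') <= local_osc K.
Proof.
  intros Hk Hk' Hl Hl'.
  set (a := (l / 2 ^ Z.of_nat (k - K))%Z). set (a' := (l' / 2 ^ Z.of_nat (k' - K))%Z).
  assert (Ha := Z_div_pow2_near x K k l Hk Hl).
  assert (Ha' := Z_div_pow2_near x K k' l' Hk' Hl').
  fold a in Ha. fold a' in Ha'.
  assert (Haa : (Z.abs (a - a') <= osc_range)%Z).
  { assert (IZR (a - a') < 3 /\ IZR (a' - a) < 3) as [H1 H2] by (rewrite !minus_IZR; lra).
    apply lt_IZR in H1, H2. unfold osc_range. lia. }
  pose proof (osc_le_geometric K a a' Haa) as Hmid.
  pose proof (divdiff_ancestor_dist_le K (k - K) l) as Hanc.
  pose proof (divdiff_ancestor_dist_le K (k' - K) l') as Hanc'.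
  replace (K + (k - K))%nat with k in Hanc by lia.
  replace (K + (k' - K))%nat with k' in Hanc' by lia.
  fold a in Hanc. fold a' in Hanc'.
  apply Rabs_le_between in Hmid, Hanc, Hanc'. apply Rabs_le_between.
  pose proof theta_pos.
  replace (local_osc K) with (4 * B * mu ^ K / theta + 4 * B * mu ^ K / theta + 4 * B * mu ^ K)
    by (unfold local_osc; field; lra).
  lra.
Qed.

Definition deriv_limit (x : R) : R := real (Lim_seq (fun k => divdiff k (dfloor k x))).

Lemma divdiff_near_deriv_limit (x : R) (K k : nat) (l : Z) :
  (K <= k)%nat -> Rabs (IZR l / 2 ^ k - x) <= / 2 ^ K ->
  Rabs (divdiff k l - deriv_limit x) <= local_osc K.
Proof.
  intros Hk Hl.
  set (u j := divdiff j (dfloor j x)).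
  assert (Hgrid : forall K j, (K <= j)%nat -> Rabs (IZR (dfloor j x) / 2 ^ j - x) <= / 2 ^ K)
    by (intros; eapply Rle_trans; [apply dfloor_dist | apply inv_pow2_le; auto]).
  assert (Hcv : ex_finite_lim_seq u).
  { apply ex_lim_seq_cauchy_corr. intros [eps Heps]. simpl.
    destruct (local_osc_small (eps / 2)) as [K0 HK0]; [lra|].
    exists K0. intros p q Hp Hq.
    eapply Rle_lt_trans; [apply (divdiff_local_dist x K0); auto | lra]. }
  apply (is_lim_seq_le_loc (fun j => Rabs (divdiff k l - u j)) (fun _ => local_osc K)
           (Rabs (divdiff k l - deriv_limit x)) (local_osc K)).
  - exists K. intros j Hj. apply (divdiff_local_dist x K); auto.
  - apply (is_lim_seq_abs _ (divdiff k l - deriv_limit x)).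
    apply is_lim_seq_minus'; [apply is_lim_seq_const | apply Lim_seq_correct', Hcv].
  - apply is_lim_seq_const.
Qed.

Lemma deriv_limit_continuous (x : R) : continuous deriv_limit x.
Proof.
  apply continuity_pt_filterlim. intros eps Heps.
  destruct (local_osc_small (eps / 3)) as [K HK]; [lra|].
  exists (/ 2 ^ S K). split; [apply inv_pow2_pos|].
  intros y [_ Hy]. change (Rabs (y - x) < / 2 ^ S K) in Hy. rewrite inv_pow2_S in Hy.
  change (Rabs (deriv_limit y - deriv_limit x) < eps).
  set (l := dfloor (S K) y).
  assert (Hl := dfloor_dist (S K) y). fold l in Hl. rewrite inv_pow2_S in Hl.
  assert (H1 : Rabs (divdiff (S K) l - deriv_limit y) <= local_osc K).
  { apply divdiff_near_deriv_limit; [lia|].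
    pose proof (inv_pow2_pos K). apply Rabs_le_between in Hl. apply Rabs_le_between. lra. }
  assert (H2 : Rabs (divdiff (S K) l - deriv_limit x) <= local_osc K).
  { apply divdiff_near_deriv_limit; [lia|].
    apply Rabs_le_between in Hl. apply Rabs_def2 in Hy. apply Rabs_le_between. lra. }
  apply Rabs_le_between in H1, H2. apply Rabs_def1; lra.
Qed.

Variable F : R -> R.
Hypothesis F_limit : is_limit_function n f0 F.

Lemma is_lim_seq_subdiv_dfloor (x : R) :
  is_lim_seq (fun k => subdiv n f0 k (dfloor k x)) (F x).
Proof.
  destruct F_limit as [HFc HFu].
  set (y k := IZR (dfloor k x) / 2 ^ k).
  assert (Herr : is_lim_seq (fun k => subdiv n f0 k (dfloor k x) - F (y k)) 0).
  { apply is_lim_seq_spec. intros [eps Heps]. simpl.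
    destruct (HFu (eps / 2)) as [K HK]; [lra|].
    exists K. intros k Hk. rewrite Rminus_0_r.
    eapply Rle_lt_trans; [apply HK, Hk | lra]. }
  assert (Hval : is_lim_seq (fun k => F (y k)) (F x)).
  { apply is_lim_seq_continuous; [apply continuity_pt_filterlim, HFc | apply is_lim_seq_dfloor]. }
  replace (F x) with (0 + F x) by ring.
  apply (is_lim_seq_ext (fun k => (subdiv n f0 k (dfloor k x) - F (y k)) + F (y k)));
    [intros; ring|].
  apply is_lim_seq_plus'; assumption.
Qed.

Lemma subdiv_increment_dist (k : nat) (a b g e : R) :
  a <= b -> 0 <= e ->
  (forall l, a - / 2 ^ k < IZR l / 2 ^ k -> IZR l / 2 ^ k <= b ->
     Rabs (divdiff k l - g) <= e) ->
  Rabs (subdiv n f0 k (dfloor k b) - subdiv n f0 k (dfloor k a)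
        - g * (IZR (dfloor k b) / 2 ^ k - IZR (dfloor k a) / 2 ^ k))
  <= e * (IZR (dfloor k b) / 2 ^ k - IZR (dfloor k a) / 2 ^ k).
Proof.
  intros Hab He Hd.
  destruct (dfloor_bounds k a) as [Pa1 Pa2]. destruct (dfloor_bounds k b) as [Qb1 Qb2].
  set (P := dfloor k a) in *. set (Q := dfloor k b) in *.
  assert (H2k : 0 < 2 ^ k) by (apply pow_lt; lra).
  assert (Hinv : 0 < / 2 ^ k) by (apply Rinv_0_lt_compat, H2k).
  assert (HPQ : (P <= Q)%Z).
  { apply Z.lt_succ_r, lt_IZR. rewrite succ_IZR.
    apply (Rmult_lt_reg_r (/ 2 ^ k)); auto.
    replace ((IZR Q + 1) * / 2 ^ k) with (IZR Q / 2 ^ k + / 2 ^ k) by (field; lra).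
    unfold Rdiv in *. lra. }
  set (L := Z.to_nat (Q - P)).
  assert (HQ : Q = (P + Z.of_nat L)%Z) by (unfold L; lia).
  assert (HLs : IZR Q / 2 ^ k - IZR P / 2 ^ k = INR L * / 2 ^ k).
  { rewrite HQ, plus_IZR, <- INR_IZR_INZ. field. lra. }
  rewrite HLs, HQ.
  replace (g * (INR L * / 2 ^ k)) with (INR L * (g * / 2 ^ k)) by ring.
  replace (e * (INR L * / 2 ^ k)) with (INR L * (e * / 2 ^ k)) by ring.
  apply sum_of_increments_dist. intros t Ht.
  replace (subdiv n f0 k (P + Z.of_nat t + 1) - subdiv n f0 k (P + Z.of_nat t) - g * / 2 ^ k)
    with ((divdiff k (P + Z.of_nat t) - g) * / 2 ^ k) by (unfold divdiff; field; lra).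
  rewrite Rabs_mult, (Rabs_pos_eq (/ 2 ^ k)) by lra.
  apply Rmult_le_compat_r; [lra|]. apply Hd.
  - apply Rlt_le_trans with (IZR P / 2 ^ k); [lra|].
    apply Rmult_le_compat_r; [lra | apply IZR_le; lia].
  - apply Rle_trans with (IZR Q / 2 ^ k); [|lra].
    apply Rmult_le_compat_r; [lra | apply IZR_le; lia].
Qed.

Lemma limit_increment_dist (a b g e : R) (K : nat) :
  a <= b -> 0 <= e ->
  (forall k l, (K <= k)%nat -> a - / 2 ^ k < IZR l / 2 ^ k -> IZR l / 2 ^ k <= b ->
     Rabs (divdiff k l - g) <= e) ->
  Rabs (F b - F a - g * (b - a)) <= e * (b - a).
Proof.
  intros Hab He Hd.
  set (s k := IZR (dfloor k b) / 2 ^ k - IZR (dfloor k a) / 2 ^ k).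
  assert (Hs : is_lim_seq s (b - a))
    by (apply is_lim_seq_minus'; apply is_lim_seq_dfloor).
  apply (is_lim_seq_le_loc
    (fun k => Rabs (subdiv n f0 k (dfloor k b) - subdiv n f0 k (dfloor k a) - g * s k))
    (fun k => e * s k) (Rabs (F b - F a - g * (b - a))) (e * (b - a))).
  - exists K. intros k Hk. apply subdiv_increment_dist; auto.
  - apply (is_lim_seq_abs _ (F b - F a - g * (b - a))).
    apply is_lim_seq_minus'; [apply is_lim_seq_minus'; apply is_lim_seq_subdiv_dfloor|].
    apply is_lim_seq_mult'; [apply is_lim_seq_const | exact Hs].
  - apply is_lim_seq_mult'; [apply is_lim_seq_const | exact Hs].
Qed.

Lemma increment_near_deriv_limit (K : nat) (x y : R) :
  Rabs (y - x) < / 2 ^ S K ->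
  Rabs (F y - F x - deriv_limit x * (y - x)) <= local_osc K * Rabs (y - x).
Proof.
  intros Hxy. rewrite inv_pow2_S in Hxy. apply Rabs_def2 in Hxy.
  pose proof (local_osc_nonneg K).
  assert (Hnear : forall a b, x - / 2 ^ K / 2 <= a -> b <= x + / 2 ^ K / 2 ->
    forall k l, (S K <= k)%nat -> a - / 2 ^ k < IZR l / 2 ^ k -> IZR l / 2 ^ k <= b ->
    Rabs (divdiff k l - deriv_limit x) <= local_osc K).
  { intros a b Ha Hb k l Hk Hl1 Hl2. apply divdiff_near_deriv_limit; [lia|].
    pose proof (inv_pow2_le _ _ Hk). rewrite inv_pow2_S in *.
    apply Rabs_le_between. lra. }
  destruct (Rle_or_lt x y) as [Hle|Hlt].
  - rewrite (Rabs_pos_eq (y - x)) by lra.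
    apply (limit_increment_dist x y _ _ (S K)); auto. apply Hnear; lra.
  - rewrite (Rabs_left (y - x)) by lra.
    replace (F y - F x - deriv_limit x * (y - x))
      with (- (F x - F y - deriv_limit x * (x - y))) by ring.
    rewrite Rabs_Ropp. replace (- (y - x)) with (x - y) by ring.
    apply (limit_increment_dist y x _ _ (S K)); [lra | auto |]. apply Hnear; lra.
Qed.

Lemma derivable_pt_lim_deriv_limit (x : R) : derivable_pt_lim F x (deriv_limit x).
Proof.
  intros eps Heps.
  destruct (local_osc_small (eps / 2)) as [K HK]; [lra|].
  exists (mkposreal _ (inv_pow2_pos (S K))). intros h Hh0 Hh. simpl in Hh.
  assert (Hinc := increment_near_deriv_limit K x (x + h)).
  replace (x + h - x) with h in Hinc by ring.
  specialize (Hinc Hh).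
  replace ((F (x + h) - F x) / h - deriv_limit x)
    with ((F (x + h) - F x - deriv_limit x * h) / h) by (field; auto).
  assert (Hpos : 0 < Rabs h) by (apply Rabs_pos_lt; auto).
  rewrite Rabs_div by auto.
  apply Rle_lt_trans with (local_osc K); [apply Rle_div_l; auto | lra].
Qed.

End DerivedScheme.

Theorem theorem2 (n : nat) (Hn : (2 <= n)%nat) (f0 : Z -> R)
  (Hb : bounded_seq f0) (F : R -> R) (HF : is_limit_function n f0 F) :
  is_C1 F.
Proof.
  destruct Hb as [B HB].
  assert (Hd : forall x, is_derive F x (deriv_limit n f0 x))
    by (intros x; apply is_derive_Reals, (derivable_pt_lim_deriv_limit n Hn f0 B HB F HF)).
  split.
  - intros x. exists (deriv_limit n f0 x). apply Hd.
  - intros x. apply (continuous_ext (deriv_limit n f0)).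
    + intros y. symmetry. apply is_derive_unique, Hd.
    + apply (deriv_limit_continuous n Hn f0 B HB).
Qed.
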